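(* (i) Let $\mu$ be a measure and $f,g$ nonnegative elements of $\mathbb{L}_2(\mu)$ with $\|f\|=1$ and $\|g\|>0$, and let $\overline{g}=g/\|g\|$. Then \[ \|f-\overline{g}\|^2\le\frac{4\|f-g\|^2}{4-\|f-\overline{g}\|^2}\le2\|f-g\|^2. \] (ii) If $s$ is a probability density with respect to $\mu$, $g$ a nonnegative element of $\mathbb{L}_2(\mu)$ with $\|g\|>0$ and $u=(g/\|g\|)^2$, then $u$ is a probability density with respect to $\mu$ and \[ h^2(s,u)\le1-\sqrt{1-\left(\|\sqrt{s}-g\|^2\wedge1\right)}\le\|\sqrt{s}-g\|^2\wedge1. \] (iii) If $t\in\mathbb{L}_1(\mu)$ satisfies $\int(t\vee0)\,d\mu>0$ and $\pi(t)=(t\vee0)/\int(t\vee0)\,d\mu$, then \[ h^2(s,\pi(t))\le1-\sqrt{1-\left(\|\sqrt{s}-\sqrt{t\vee0}\|^2\wedge1\right)}\le\|\sqrt{s}-\sqrt{t\vee0}\|^2\wedge1. \]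
   Context: $\|\cdot\|$ is the $\mathbb{L}_2(\mu)$ norm. For probability densities $s,u$ with respect to $\mu$, $h^2(s,u)=\frac12\int(\sqrt{s}-\sqrt{u})^2\,d\mu$ is the squared Hellinger distance. *)

From HB Require Import structures.
From mathcomp Require Import all_boot all_order all_algebra.
From mathcomp Require Import all_classical all_reals all_analysis.
Set Implicit Arguments. Unset Strict Implicit. Unset Printing Implicit Defensive.
Import Order.TTheory GRing.Theory Num.Theory.
Local Open Scope classical_set_scope.
Local Open Scope ring_scope.

Definition isL2 d (T : measurableType d) (R : realType)
  (mu : {measure set T -> \bar R}) (f : T -> R) : Prop :=
  measurable_fun setT f /\ mu.-integrable setT (fun x => (f x ^+ 2)%:E).

Definition isL1 d (T : measurableType d) (R : realType)
  (mu : {measure set T -> \bar R}) (f : T -> R) : Prop :=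
  measurable_fun setT f /\ mu.-integrable setT (fun x => (f x)%:E).

Definition L2norm d (T : measurableType d) (R : realType)
  (mu : {measure set T -> \bar R}) (f : T -> R) : R :=
  Num.sqrt (fine (\int[mu]_x (f x ^+ 2)%:E)).

Definition is_density d (T : measurableType d) (R : realType)
  (mu : {measure set T -> \bar R}) (s : T -> R) : Prop :=
  measurable_fun setT s /\ (forall x, 0 <= s x) /\
  (\int[mu]_x (s x)%:E = 1)%E.

Definition hellinger2 d (T : measurableType d) (R : realType)
  (mu : {measure set T -> \bar R}) (s u : T -> R) : R :=
  2^-1 * fine (\int[mu]_x ((Num.sqrt (s x) - Num.sqrt (u x)) ^+ 2)%:E).

From HB Require Import structures.
From mathcomp Require Import all_boot all_order all_algebra.
From mathcomp Require Import all_classical all_reals all_analysis.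
From mathcomp Require Import ring lra measurable_realfun.
Set Implicit Arguments. Unset Strict Implicit. Unset Printing Implicit Defensive.
Import Order.TTheory GRing.Theory Num.Theory.
Local Open Scope classical_set_scope.
Local Open Scope ring_scope.

(* Everything reduces to one scalar computation.  Put [N = ||g||] and let
   [a = <f, g>/N] be the cosine between the unit vector [f] and [g].  Then
   [||f - g/N||^2 = 2 - 2a] and [||f - g||^2 = 1 - 2aN + N^2 >= 1 - a^2], the
   squared distance from [f] to the ray through [g]; when [f = sqrt s] and
   [g/N = sqrt u] also [h^2(s, u) = 1 - a].  Parts (i) and (ii) are then
   inequalities between [a], [N] and [1 - a^2 <= ||f - g||^2], and (iii) is
   (ii) for [g = sqrt (max t 0)], whose normalized square is [pi(t)]. *)

Section scalar_inequalities.
Variable R : realType.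

Lemma sqr_dist_to_ray_ge (a N : R) : 1 - a ^+ 2 <= 1 - 2 * a * N + N ^+ 2.
Proof. have := sqr_ge0 (N - a); rewrite !expr2; lra. Qed.

Lemma normalization_bounds (a N : R) : 0 <= a -> 0 <= 1 - 2 * a * N + N ^+ 2 ->
  2 - 2 * a <= 4 * (1 - 2 * a * N + N ^+ 2) / (4 - (2 - 2 * a))
            <= 2 * (1 - 2 * a * N + N ^+ 2).
Proof.
move=> a0 B0; have B_ge := sqr_dist_to_ray_ge a N.
have D0 : 0 < 4 - (2 - 2 * a) by lra.
by apply/andP; split; [rewrite ler_pdivlMr // | rewrite ler_pdivrMr //]; nra.
Qed.

Lemma sqrt_le_of_sqr_le (a e : R) : 0 <= a -> e <= a ^+ 2 -> Num.sqrt e <= a.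
Proof.
move=> a0 ea; rewrite -(ger0_norm a0) -sqrtr_sqr.
by rewrite ler_sqrt // sqr_ge0.
Qed.

Lemma one_sub_sqrt_one_sub_le (e : R) : 0 <= e <= 1 -> 1 - Num.sqrt (1 - e) <= e.
Proof.
case/andP=> e0 e1.
have r0 := sqrtr_ge0 (1 - e).
have r2 : Num.sqrt (1 - e) ^+ 2 = 1 - e by rewrite sqr_sqrtr // subr_ge0.
have r1 : Num.sqrt (1 - e) <= 1 by apply: sqrt_le_of_sqr_le; rewrite ?expr1n; lra.
nra.
Qed.

Lemma one_sub_le_one_sub_sqrt_min (a N : R) : 0 <= a ->
  1 - a <= 1 - Num.sqrt (1 - Order.min (1 - 2 * a * N + N ^+ 2) 1).
Proof.
move=> a0; rewrite lerD2l lerN2; apply: sqrt_le_of_sqr_le => //.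
rewrite lerBlDr -lerBlDl le_min sqr_dist_to_ray_ge /=.
by rewrite lerBlDl lerDr sqr_ge0.
Qed.

End scalar_inequalities.

Section L2_geometry.
Context (d : measure_display) (T : measurableType d) (R : realType).
Context (mu : {measure set T -> \bar R}).

Definition L2dot (f g : T -> R) : R := fine (\int[mu]_x (f x * g x)%:E).

Lemma L2norm_sqrE (f : T -> R) :
  L2norm mu f ^+ 2 = fine (\int[mu]_x (f x ^+ 2)%:E).
Proof.
rewrite /L2norm sqr_sqrtr //; apply/fine_ge0/integral_ge0 => x _.
by rewrite lee_fin sqr_ge0.
Qed.

Lemma L2dot_ge0 (f g : T -> R) :
  (forall x, 0 <= f x) -> (forall x, 0 <= g x) -> 0 <= L2dot f g.
Proof.
move=> f0 g0; apply/fine_ge0/integral_ge0 => x _.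
by rewrite lee_fin mulr_ge0.
Qed.

(* Domination [|fg| <= f^2 + g^2]. *)
Lemma integrable_mul_L2 (f g : T -> R) : isL2 mu f -> isL2 mu g ->
  mu.-integrable setT (EFin \o (fun x => f x * g x)).
Proof.
move=> [mf If] [mg Ig].
apply: (le_integrable measurableT _ _ (integrableD measurableT If Ig)).
  by apply/measurable_EFinP; exact: measurable_funM.
move=> x _ /=; rewrite lee_fin [X in _ <= X]ger0_norm ?addr_ge0 ?sqr_ge0 //.
by have [fg0|fg0] := leP 0 (f x * g x); [rewrite ger0_norm | rewrite ltr0_norm]; nra.
Qed.

Lemma L2norm_sub_scale_sqr (f g h : T -> R) (c : R) :
  isL2 mu f -> isL2 mu g -> (forall x, h x = f x - c * g x) ->
  L2norm mu h ^+ 2 =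
  L2norm mu f ^+ 2 - 2 * c * L2dot f g + c ^+ 2 * L2norm mu g ^+ 2.
Proof.
move=> Hf Hg eh; have Ifg := integrable_mul_L2 Hf Hg.
case: Hf Hg => [_ If] [_ Ig]; rewrite !L2norm_sqrE.
have -> : fine (\int[mu]_x (h x ^+ 2)%:E) = \int[mu]_(x in setT)
    (f x ^+ 2 + ((- (2 * c)) * (f x * g x) + c ^+ 2 * g x ^+ 2)).
  by congr fine; apply: eq_integral => x _; rewrite eh; congr EFin; ring.
have IZfg := integrableZl measurableT (- (2 * c)) Ifg.
have IZg := integrableZl measurableT (c ^+ 2) Ig.
rewrite RintegralD //; last exact: (integrableD measurableT IZfg IZg).
by rewrite RintegralD // !RintegralZl // /Rintegral /L2dot; ring.
Qed.

Lemma isL2_sqrt (f : T -> R) : measurable_fun setT f -> (forall x, 0 <= f x) ->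
  mu.-integrable setT (EFin \o f) -> isL2 mu (fun x => Num.sqrt (f x)).
Proof.
move=> mf f0 If; split.
  exact: measurableT_comp (continuous_measurable_fun (@sqrt_continuous R)) mf.
by apply: (eq_integrable measurableT _ _ _ If) => x _ /=; rewrite sqr_sqrtr.
Qed.

Lemma L2norm_sqrt (f : T -> R) : (forall x, 0 <= f x) ->
  L2norm mu (fun x => Num.sqrt (f x)) = Num.sqrt (fine (\int[mu]_x (f x)%:E)).
Proof.
by move=> f0; rewrite /L2norm; under eq_integral do rewrite sqr_sqrtr //.
Qed.

Lemma density_integrable (s : T -> R) :
  is_density mu s -> mu.-integrable setT (EFin \o s).
Proof.
move=> [ms [s0 s1]]; apply/integrableP; split; first exact/measurable_EFinP.
under eq_integral => x _ do rewrite /= ger0_norm //.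
by rewrite s1 ltry.
Qed.

Lemma is_density_normalized_sqr (g : T -> R) : isL2 mu g -> 0 < L2norm mu g ->
  is_density mu (fun x => (g x / L2norm mu g) ^+ 2).
Proof.
move=> [mg Ig] Ng; set N := L2norm mu g.
split; first by apply/measurable_funX/measurable_funM => //; exact: measurable_cst.
split=> [x|]; first exact: sqr_ge0.
have -> : (\int[mu]_x ((g x / N) ^+ 2)%:E = (N^-1 ^+ 2)%:E * \int[mu]_x (g x ^+ 2)%:E)%E.
  by rewrite -integralZl //; apply: eq_integral => x _; rewrite -EFinM exprMn mulrC.
rewrite -(fineK (integrable_fin_num measurableT Ig)) -L2norm_sqrE -EFinM.
by rewrite -exprMn mulVf ?expr1n ?gt_eqF.
Qed.

Lemma L2norm_sub_normalized_sqr (f g : T -> R) : isL2 mu f -> isL2 mu g ->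
  L2norm mu f = 1 -> 0 < L2norm mu g ->
  L2norm mu (fun x => f x - g x / L2norm mu g) ^+ 2
    = 2 - 2 * (L2dot f g / L2norm mu g) /\
  L2norm mu (fun x => f x - g x) ^+ 2
    = 1 - 2 * (L2dot f g / L2norm mu g) * L2norm mu g + L2norm mu g ^+ 2.
Proof.
move=> Hf Hg nf Ng; have NN : L2norm mu g != 0 by rewrite gt_eqF.
rewrite (L2norm_sub_scale_sqr (h := fun x => f x - g x / L2norm mu g)
          (c := (L2norm mu g)^-1) Hf Hg); last by move=> x; rewrite mulrC.
rewrite (L2norm_sub_scale_sqr (h := fun x => f x - g x) (c := 1) Hf Hg);
  last by move=> x; rewrite mul1r.
by rewrite nf; split; field.
Qed.

Lemma normalization_dist_bounds (f g : T -> R) :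
  isL2 mu f -> isL2 mu g -> (forall x, 0 <= f x) -> (forall x, 0 <= g x) ->
  L2norm mu f = 1 -> 0 < L2norm mu g ->
  let gbar := fun x => g x / L2norm mu g in
  L2norm mu (fun x => f x - gbar x) ^+ 2
    <= 4 * L2norm mu (fun x => f x - g x) ^+ 2
       / (4 - L2norm mu (fun x => f x - gbar x) ^+ 2)
  /\ 4 * L2norm mu (fun x => f x - g x) ^+ 2
       / (4 - L2norm mu (fun x => f x - gbar x) ^+ 2)
     <= 2 * L2norm mu (fun x => f x - g x) ^+ 2.
Proof.
move=> Hf Hg f0 g0 nf Ng gbar.
have B0 := sqr_ge0 (L2norm mu (fun x => f x - g x)).
have [eA eB] := L2norm_sub_normalized_sqr Hf Hg nf Ng.
rewrite /gbar eA eB in B0 *; apply/andP/normalization_bounds => //.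
exact: divr_ge0 (L2dot_ge0 f0 g0) (ltW Ng).
Qed.

Lemma hellinger_normalized_bounds (s g : T -> R) :
  is_density mu s -> isL2 mu g -> (forall x, 0 <= g x) -> 0 < L2norm mu g ->
  let u := fun x => (g x / L2norm mu g) ^+ 2 in
  let e := Order.min (L2norm mu (fun x => Num.sqrt (s x) - g x) ^+ 2) 1 in
  is_density mu u /\
  hellinger2 mu s u <= 1 - Num.sqrt (1 - e) /\
  1 - Num.sqrt (1 - e) <= e.
Proof.
move=> Hs Hg g0 Ng u e; have [ms [s0 s1]] := Hs.
have Hf := isL2_sqrt ms s0 (density_integrable Hs).
have nf : L2norm mu (fun x => Num.sqrt (s x)) = 1.
  by rewrite L2norm_sqrt // s1 sqrtr1.
have e01 : 0 <= e <= 1 by rewrite le_min ge_min sqr_ge0 lexx ler01 orbT.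
have [eA eB] := L2norm_sub_normalized_sqr Hf Hg nf Ng.
have eH : hellinger2 mu s u = 1 - L2dot (fun x => Num.sqrt (s x)) g / L2norm mu g.
  rewrite /hellinger2 -L2norm_sqrE.
  have -> : (fun x => Num.sqrt (s x) - Num.sqrt (u x))
          = (fun x => Num.sqrt (s x) - g x / L2norm mu g).
    by apply: funext => x; rewrite sqrtr_sqr ger0_norm // divr_ge0 // ltW.
  by rewrite eA; set a := _ / L2norm mu g; field.
split; first exact: is_density_normalized_sqr.
split; last exact: one_sub_sqrt_one_sub_le.
rewrite eH /e eB; apply: one_sub_le_one_sub_sqrt_min.
exact: divr_ge0 (L2dot_ge0 (fun x => sqrtr_ge0 _) g0) (ltW Ng).
Qed.

Lemma hellinger_positive_part_bounds (s t : T -> R) :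
  is_density mu s -> isL1 mu t ->
  (0 < \int[mu]_x (Order.max (t x) 0)%:E)%E ->
  let pit := fun x => Order.max (t x) 0 /
                      fine (\int[mu]_y (Order.max (t y) 0)%:E) in
  let e := Order.min (L2norm mu (fun x => Num.sqrt (s x)
                           - Num.sqrt (Order.max (t x) 0)) ^+ 2) 1 in
  hellinger2 mu s pit <= 1 - Num.sqrt (1 - e) /\
  1 - Num.sqrt (1 - e) <= e.
Proof.
move=> Hs [mt It] tp_gt0 pit e.
set tp := fun x => Order.max (t x) 0.
have tp0 x : 0 <= tp x by rewrite le_max lexx orbT.
have mtp : measurable_fun setT tp := measurable_maxr mt (measurable_cst (0 : R)).
have Itp : mu.-integrable setT (EFin \o tp).
  apply: (le_integrable measurableT _ _ It); first exact/measurable_EFinP.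
  by move=> x _; rewrite lee_fin /= ger0_norm // ge_max ler_norm normr_ge0.
have c_gt0 : 0 < fine (\int[mu]_x (tp x)%:E).
  by rewrite -lte_fin fineK // (integrable_fin_num measurableT Itp).
have eN := L2norm_sqrt tp0.
have N_gt0 : 0 < L2norm mu (fun x => Num.sqrt (tp x)) by rewrite eN sqrtr_gt0.
have [_] := hellinger_normalized_bounds Hs (isL2_sqrt mtp tp0 Itp)
  (fun x => sqrtr_ge0 _) N_gt0.
suff -> : (fun x => (Num.sqrt (tp x) / L2norm mu (fun x => Num.sqrt (tp x))) ^+ 2)
          = pit by [].
apply: funext => x; rewrite eN expr_div_n !sqr_sqrtr //; exact: ltW.
Qed.

End L2_geometry.

Theorem lemma1 (d : measure_display) (T : measurableType d) (R : realType)
  (mu : {measure set T -> \bar R}) :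
  (* (i) *)
  (forall f g : T -> R,
     isL2 mu f -> isL2 mu g ->
     (forall x, 0 <= f x) -> (forall x, 0 <= g x) ->
     L2norm mu f = 1 -> 0 < L2norm mu g ->
     let gbar := fun x => g x / L2norm mu g in
     L2norm mu (fun x => f x - gbar x) ^+ 2
       <= 4 * L2norm mu (fun x => f x - g x) ^+ 2
          / (4 - L2norm mu (fun x => f x - gbar x) ^+ 2)
     /\ 4 * L2norm mu (fun x => f x - g x) ^+ 2
          / (4 - L2norm mu (fun x => f x - gbar x) ^+ 2)
        <= 2 * L2norm mu (fun x => f x - g x) ^+ 2)
  /\
  (* (ii) *)
  (forall s g : T -> R,
     is_density mu s -> isL2 mu g -> (forall x, 0 <= g x) ->
     0 < L2norm mu g ->
     let u := fun x => (g x / L2norm mu g) ^+ 2 in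
     let e := Order.min (L2norm mu (fun x => Num.sqrt (s x) - g x) ^+ 2) 1 in
     is_density mu u /\
     hellinger2 mu s u <= 1 - Num.sqrt (1 - e) /\
     1 - Num.sqrt (1 - e) <= e)
  /\
  (* (iii) *)
  (forall s t : T -> R,
     is_density mu s -> isL1 mu t ->
     (0 < \int[mu]_x (Order.max (t x) 0)%:E)%E ->
     let pit := fun x => Order.max (t x) 0 /
                         fine (\int[mu]_y (Order.max (t y) 0)%:E) in
     let e := Order.min (L2norm mu (fun x => Num.sqrt (s x)
                              - Num.sqrt (Order.max (t x) 0)) ^+ 2) 1 in
     hellinger2 mu s pit <= 1 - Num.sqrt (1 - e) /\
     1 - Num.sqrt (1 - e) <= e).
Proof.
split; first exact: normalization_dist_bounds.
split; first exact: hellinger_normalized_bounds.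
exact: hellinger_positive_part_bounds.
Qed.
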